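(* Consider the unit-demand Euclidean CVRP with any set $V$ of $n$ terminals in $\mathbb{R}^2$, any depot $O\in\mathbb{R}^2$ and any capacity $k\in\mathbb{N}^+$. For any positive integer $M$, let $\mathrm{sol}(M)$ be the cost of the solution returned by the Sweep-Arora algorithm with parameter $M$ (described in the context). Then \[\mathrm{sol}(M)\le\left(1+\frac1M\right)\left(T^*_0+\mathrm{rad}_\infty+\frac{3\pi D}{2}\left\lceil\frac{n}{Mk}\right\rceil\right),\] where $D$ is the diameter of $V\cup\{O\}$.
   Context: Unit-demand Euclidean CVRP: a solution is a set of tours, each a closed curve starting and ending at $O$ visiting at most $k$ terminals, every terminal visited by some tour; cost is total Euclidean length. Sweep-Arora algorithm with parameter $M$: let $\theta(v)\in[0,2\pi)$ be the polar angle of terminal $v$ w.r.t. $O$; sort terminals as $u_1,\dots,u_n$ with $\theta(u_1)\le\cdots\le\theta(u_n)$; for $i=1,\dots,\lceil n/(Mk)\rceil$ put $V_i=\{u_j:(i-1)Mk<j\le iMk\}$ and let $S_i$ be a $(1+\frac1M)$-approximate solution of the CVRP instance $(V_i,O,k)$; output the union of the $S_i$. Here $\mathrm{rad}_\infty:=\frac2k\sum_{v\in V}d(O,v)$ and $T^*_0$ is the minimum length of a traveling salesman tour on $V$. *)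

From Stdlib Require Import Reals Lra Lia List Permutation Sorted.
Import ListNotations.
Open Scope R_scope.

Definition pt : Type := (R * R)%type.

Definition dist (p q : pt) : R :=
  sqrt ((fst p - fst q)^2 + (snd p - snd q)^2).

Fixpoint path_len (l : list pt) : R :=
  match l with
  | [] => 0
  | x :: l' =>
      match l' with
      | [] => 0
      | y :: _ => dist x y + path_len l'
      end
  end.

Definition cycle_len (l : list pt) : R :=
  match l with
  | [] => 0
  | x :: _ => path_len (l ++ [x])
  end.

Definition is_min_tsp (V : list pt) (T0 : R) : Prop :=
  (exists p, Permutation V p /\ cycle_len p = T0) /\
  (forall p, Permutation V p -> T0 <= cycle_len p).

(* A tour is the closed polygonal curve O -> t_1 -> ... -> t_m -> O;
   its list t of waypoints may contain arbitrary points; the terminals it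
   visits are the terminals of the instance occurring in t. *)
Definition tour_cost (O : pt) (t : list pt) : R := path_len (O :: t ++ [O]).

Definition sol_cost (O : pt) (S : list (list pt)) : R :=
  fold_right Rplus 0 (map (tour_cost O) S).

Definition is_cvrp_solution (W : list pt) (O : pt) (k : nat)
    (S : list (list pt)) : Prop :=
  (forall t, In t S ->
     exists U : list pt, NoDup U /\ (length U <= k)%nat /\
       (forall p, In p t -> In p W -> In p U)) /\
  (forall v, In v W -> exists t, In t S /\ In v t).

Definition is_approx_solution (alpha : R) (W : list pt) (O : pt) (k : nat)
    (S : list (list pt)) : Prop :=
  is_cvrp_solution W O k S /\
  (forall S', is_cvrp_solution W O k S' -> sol_cost O S <= alpha * sol_cost O S').

(* theta is the polar angle w.r.t. O on the terminals V:
   theta v in [0, 2 pi) and v = O + d(O,v) (cos theta v, sin theta v).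
   (For a terminal equal to O any angle in [0,2pi) is allowed.) *)
Definition is_polar_angle (O : pt) (V : list pt) (theta : pt -> R) : Prop :=
  forall v, In v V ->
    0 <= theta v < 2 * PI /\
    fst v = fst O + dist O v * cos (theta v) /\
    snd v = snd O + dist O v * sin (theta v).

Definition rad_inf (O : pt) (V : list pt) (k : nat) : R :=
  2 / INR k * fold_right Rplus 0 (map (dist O) V).

Definition diam (l : list pt) : R :=
  fold_right Rmax 0 (map (fun p => fold_right Rmax 0 (map (dist p) l)) l).

Definition ceil_div (a b : nat) : nat := ((a + b - 1) / b)%nat.

(* the i-th group (i >= 1) of the sorted list u: entries (i-1)Mk < j <= iMk *)
Definition group (u : list pt) (Mk i : nat) : list pt :=
  firstn Mk (skipn ((i - 1) * Mk) u).

Definition union_cost (O : pt) (S : nat -> list (list pt)) (m : nat) : R :=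
  fold_right Rplus 0 (map (fun i => sol_cost O (S i)) (seq 1 m)).

(* Each [S_i] costs at most [1 + 1/M] times the optimum for [V_i]. By iterated tour
   partitioning (cut a tour through [V_i] into runs of [k] consecutive terminals, starting at
   the best of the [k] offsets) that optimum is at most the length of any closed walk through
   [O] visiting [V_i], plus [2/k] times the sum of [d(O, v)] over [V_i]; summed over all
   groups this last term is [rad_inf].

   The terminals of [V_i] lie in the angular sector between two consecutive group angles.
   Cut an optimal TSP tour wherever it passes from one group to another, replacing the edge
   [v w] by a segment from [v] to the boundary of the sector of [v] and a segment from the
   boundary of the sector of [w] to [w], which together are never longer than [v w]. The tour
   falls apart into arcs with ends on sector boundaries. The boundary of a sector, the union of
   its two bounding rays up to distance [D] from [O], is a 1-Lipschitz curve of parameter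
   length [2D] through [O]; along it all arcs of one group, and [O], are joined into a single
   closed walk at an extra cost of at most [4D], and [4D <= 3 pi D / 2]. *)

From Pilot Require Import Defs.
From Stdlib Require Import Reals List Permutation Sorted.
From Stdlib Require Import Lra Lia Rgeom.
Import ListNotations.
Open Scope R_scope.
(* [Reals] also exports a [dist], the distance field of its metric spaces. *)
Local Notation dist := Defs.dist.

Local Notation sumR := (fold_right Rplus 0).

Lemma sumR_app l1 l2 : sumR (l1 ++ l2) = sumR l1 + sumR l2.
Proof. induction l1 as [|x l1 IH]; simpl; lra. Qed.

Lemma sumR_perm l l' : Permutation l l' -> sumR l = sumR l'.
Proof. induction 1; simpl; lra. Qed.

Lemma sumR_concat (L : list (list R)) : sumR (concat L) = sumR (map sumR L).
Proof. induction L as [|l L IH]; simpl; rewrite ?sumR_app, ?IH; reflexivity. Qed.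

Section SumMap.
Variable A : Type.

Lemma sumR_le (f g : A -> R) l : (forall x, In x l -> f x <= g x) ->
  sumR (map f l) <= sumR (map g l).
Proof.
  induction l as [|a l IH]; intros H; simpl. lra.
  pose proof (H a (or_introl eq_refl)).
  assert (sumR (map f l) <= sumR (map g l)) by auto with datatypes. lra.
Qed.

Lemma sumR_plus (f g : A -> R) l :
  sumR (map (fun x => f x + g x) l) = sumR (map f l) + sumR (map g l).
Proof. induction l; simpl; lra. Qed.

Lemma sumR_scal (f : A -> R) c l : sumR (map (fun x => c * f x) l) = c * sumR (map f l).
Proof. induction l; simpl; lra. Qed.

Lemma sumR_const (c : R) (l : list A) : sumR (map (fun _ => c) l) = INR (length l) * c.
Proof. induction l as [|a l IH]; simpl map; rewrite ?length_cons, ?S_INR; simpl; lra. Qed.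

Lemma exists_min_perm (f : A -> R) l : l <> [] ->
  exists a rest, Permutation l (a :: rest) /\ forall b, In b rest -> f a <= f b.
Proof.
  induction l as [|x l IH]; intros Hl. congruence.
  destruct l as [|y l]. { exists x, []. split. reflexivity. intros b []. }
  destruct IH as [a [rest [Hp Hmin]]]. discriminate.
  destruct (Rle_dec (f x) (f a)) as [Hxa|Hax].
  - exists x, (y :: l). split. reflexivity.
    intros b Hb. apply (Permutation_in _ Hp) in Hb. destruct Hb as [<-|Hb]. lra.
    specialize (Hmin b Hb). lra.
  - exists a, (x :: rest). split. rewrite Hp. apply perm_swap.
    intros b [<-|Hb]. lra. auto.
Qed.

Lemma exists_le_average (f : A -> R) l : l <> [] ->
  exists a, In a l /\ INR (length l) * f a <= sumR (map f l).
Proof.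
  intros Hl. destruct (exists_min_perm f l Hl) as [a [rest [Hp Hmin]]].
  exists a. split. apply (Permutation_in _ (Permutation_sym Hp)). now left.
  rewrite <- sumR_const. apply sumR_le. intros b Hb.
  apply (Permutation_in _ Hp) in Hb. destruct Hb as [<-|Hb]. lra. auto.
Qed.

End SumMap.

Lemma dist_euc_eq p q : dist p q = dist_euc (fst p) (snd p) (fst q) (snd q).
Proof. unfold dist, dist_euc. now rewrite !Rsqr_pow2. Qed.

Lemma dist_sym p q : dist p q = dist q p.
Proof. rewrite !dist_euc_eq. apply distance_symm. Qed.

Lemma dist_nonneg p q : 0 <= dist p q.
Proof. apply sqrt_pos. Qed.

Lemma dist_refl p : dist p p = 0.
Proof. rewrite dist_euc_eq. apply distance_refl. Qed.

Lemma dist_triangle p q r : dist p r <= dist p q + dist q r.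
Proof. rewrite !dist_euc_eq. apply triangle. Qed.

Definition pt_eq_dec (x y : pt) : {x = y} + {x <> y}.
Proof. decide equality; apply Req_EM_T. Defined.

(** * Polygonal paths and tours *)

Lemma last_cons_default {A} (d : A) x l : last (x :: l) d = last l x.
Proof.
  revert d x. induction l as [|y l IH]; intros d x. reflexivity.
  change (last (y :: l) d = last (y :: l) x). now rewrite !IH.
Qed.

Lemma last_app {A} (d : A) l1 l2 : l2 <> [] -> last (l1 ++ l2) d = last l2 d.
Proof.
  intros H. induction l1 as [|x l1 IH]. reflexivity.
  rewrite <- app_comm_cons, <- IH. destruct (l1 ++ l2) eqn:E. 
  - destruct (app_eq_nil _ _ E). congruence.
  - reflexivity.
Qed.

Lemma path_len_cons2 x y l : path_len (x :: y :: l) = dist x y + path_len (y :: l).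
Proof. reflexivity. Qed.

Lemma path_len_nonneg l : 0 <= path_len l.
Proof.
  induction l as [|x [|y l] IH]; simpl. lra. lra.
  pose proof (dist_nonneg x y). simpl in IH. lra.
Qed.

Lemma path_len_app d l1 l2 : l1 <> [] -> l2 <> [] ->
  path_len (l1 ++ l2) = path_len l1 + dist (last l1 d) (hd d l2) + path_len l2.
Proof.
  intros H1 H2. induction l1 as [|x [|y l1] IH]; try congruence.
  - destruct l2 as [|z l2]. congruence. simpl. lra.
  - specialize (IH ltac:(discriminate)). cbn [app] in IH |- *.
    rewrite !path_len_cons2, IH. simpl last. lra.
Qed.

Lemma path_len_app_cons l1 x l2 :
  path_len (l1 ++ x :: l2) = path_len (l1 ++ [x]) + path_len (x :: l2).
Proof.
  destruct l1 as [|a l1]. simpl. lra.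
  rewrite (path_len_app x (a :: l1) (x :: l2)), (path_len_app x (a :: l1) [x]) by discriminate.
  simpl. lra.
Qed.

Lemma path_len_rev l : path_len (rev l) = path_len l.
Proof.
  induction l as [|x [|y l] IH]. 1,2: reflexivity.
  change (rev (x :: y :: l)) with ((rev l ++ [y]) ++ [x]).
  rewrite (path_len_app x)
    by (intros E; try discriminate; destruct (app_eq_nil _ _ E); discriminate).
  change (rev l ++ [y]) with (rev (y :: l)). rewrite IH.
  simpl. rewrite last_last, dist_sym. lra.
Qed.

Lemma cycle_len_eq d l : l <> [] -> cycle_len l = path_len l + dist (last l d) (hd d l).
Proof.
  intros H. destruct l as [|a l]. congruence.
  unfold cycle_len. rewrite (path_len_app d) by discriminate. simpl. lra.
Qed.

Lemma cycle_len_rotate l1 l2 : cycle_len (l1 ++ l2) = cycle_len (l2 ++ l1).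
Proof.
  destruct l1 as [|a l1]; [now rewrite app_nil_r|].
  destruct l2 as [|b l2]; [now rewrite app_nil_r|].
  rewrite !(cycle_len_eq a) by (intros E; destruct (app_eq_nil _ _ E); discriminate).
  rewrite !(path_len_app a), !last_app by discriminate. simpl. lra.
Qed.

Lemma cycle_len_nonneg l : 0 <= cycle_len l.
Proof. destruct l; [apply Rle_refl|apply path_len_nonneg]. Qed.

Inductive sublist : list pt -> list pt -> Prop :=
| sublist_nil : sublist [] []
| sublist_keep x l1 l2 : sublist l1 l2 -> sublist (x :: l1) (x :: l2)
| sublist_skip x l1 l2 : sublist l1 l2 -> sublist l1 (x :: l2).

Lemma sublist_path_len c w : sublist c w ->
  forall a b, path_len (a :: c ++ [b]) <= path_len (a :: w ++ [b]).
Proof.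
  induction 1 as [|x c w _ IH|x c w _ IH]; intros a b; cbn [app].
  - lra.
  - rewrite !path_len_cons2. specialize (IH x b). lra.
  - rewrite path_len_cons2. specialize (IH x b).
    destruct (c ++ [b]) as [|z r] eqn:E. { destruct c; discriminate. }
    rewrite !path_len_cons2 in *. pose proof (dist_triangle a x z). lra.
Qed.

Lemma sublist_filter f l : sublist (filter f l) l.
Proof.
  induction l as [|x l IH]; simpl. constructor.
  destruct (f x); now constructor.
Qed.

Lemma sublist_nodup l : sublist (nodup pt_eq_dec l) l.
Proof.
  induction l as [|x l IH]; simpl. constructor.
  destruct (in_dec pt_eq_dec x l); now constructor.
Qed.

Section Tours.
Variable O : pt.

Lemma tour_cost_nil : tour_cost O [] = 0.
Proof. unfold tour_cost. simpl. rewrite dist_refl. lra. Qed.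

Lemma tour_cost_depot_cons t : tour_cost O (O :: t) = cycle_len (O :: t).
Proof.
  unfold tour_cost, cycle_len. cbn [app]. rewrite path_len_cons2, dist_refl. lra.
Qed.

Lemma tour_cost_rotate_depot w : In O w -> exists w', incl w w' /\ tour_cost O w' = cycle_len w.
Proof.
  intros Hw. destruct (in_split O w Hw) as [w1 [w2 ->]].
  exists (O :: w2 ++ w1). split.
  - intros x Hx. apply in_app_or in Hx. destruct Hx as [Hx|[<-|Hx]].
    + right. apply in_or_app. now right.
    + now left.
    + right. apply in_or_app. now left.
  - rewrite tour_cost_depot_cons, app_comm_cons, cycle_len_rotate. reflexivity.
Qed.

Lemma tour_cost_le_cycle d p : p <> [] -> tour_cost O p <= cycle_len p + 2 * dist O (hd d p).
Proof.
  intros Hp. destruct p as [|a t]. congruence.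
  unfold tour_cost. cbn [app]. rewrite path_len_cons2, (cycle_len_eq d) by exact Hp.
  change (a :: t ++ [O]) with ((a :: t) ++ [O]).
  rewrite (path_len_app d) by discriminate.
  pose proof (dist_triangle (last (a :: t) d) a O). rewrite (dist_sym a O) in *.
  simpl hd. change (path_len [O]) with 0. lra.
Qed.

Lemma tour_cost_split l1 x l2 :
  tour_cost O (l1 ++ [x]) + tour_cost O l2 <= tour_cost O (l1 ++ x :: l2) + 2 * dist O x.
Proof.
  destruct l2 as [|y l2].
  { rewrite tour_cost_nil. pose proof (dist_nonneg O x). lra. }
  unfold tour_cost. rewrite <- !app_assoc. cbn [app].
  change (O :: l1 ++ [x; O]) with ((O :: l1) ++ [x; O]).
  change (O :: l1 ++ x :: y :: l2 ++ [O]) with ((O :: l1) ++ x :: y :: l2 ++ [O]).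
  rewrite (path_len_app_cons _ x [O]), (path_len_app_cons _ x (y :: l2 ++ [O])).
  rewrite !path_len_cons2. pose proof (dist_triangle O x y). rewrite (dist_sym x O).
  change (path_len [O]) with 0. lra.
Qed.

Lemma shortcut_tour W w : NoDup W -> incl W w ->
  exists c, Permutation W c /\ tour_cost O c <= tour_cost O w.
Proof.
  intros HW Hincl.
  set (f := fun x => if in_dec pt_eq_dec x W then true else false).
  exists (nodup pt_eq_dec (filter f w)). split.
  - apply NoDup_Permutation. exact HW. apply NoDup_nodup.
    intros x. rewrite nodup_In, filter_In. unfold f.
    destruct (in_dec pt_eq_dec x W) as [HxW|HxW].
    + split; [auto|tauto].
    + split; [tauto|intros [_ E]; discriminate].
  - unfold tour_cost. eapply Rle_trans; apply sublist_path_len.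
    apply sublist_nodup. apply sublist_filter.
Qed.

End Tours.

Lemma NoDup_concat_in {A} (cs : list (list A)) ch : In ch cs -> NoDup (concat cs) -> NoDup ch.
Proof.
  induction cs as [|h t IH]; simpl. intros []. intros [<-|H] N.
  - eapply NoDup_app_remove_r; eauto.
  - apply IH; auto. eapply NoDup_app_remove_l; eauto.
Qed.

(** * Iterated tour partitioning *)

Section TourPartition.
Variables (O : pt) (k : nat).
Hypothesis Hk : (1 <= k)%nat.

Definition prepend (acc : list pt) (cs : list (list pt)) : list (list pt) :=
  match cs with [] => [acc] | h :: t => (acc ++ h) :: t end.

(* [chunks c l] cuts [l] after its [c]-th point and then after every [k] further points. *)
Fixpoint chunks (c : nat) (l : list pt) : list (list pt) :=
  match l with
  | [] => [[]]
  | x :: l' => if Nat.eqb c 1 then [x] :: chunks k l' else prepend [x] (chunks (c - 1) l')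
  end.

(* Cutting the tour at [x] costs at most [2 d(O, x)]. *)
Fixpoint cut_cost (c : nat) (l : list pt) : R :=
  match l with
  | [] => 0
  | x :: l' => if Nat.eqb c 1 then dist O x + cut_cost k l' else cut_cost (c - 1) l'
  end.

Lemma concat_prepend acc cs : concat (prepend acc cs) = acc ++ concat cs.
Proof. destruct cs; simpl; now rewrite ?app_nil_r, ?app_assoc. Qed.

Lemma concat_chunks l c : concat (chunks c l) = l.
Proof.
  revert c. induction l as [|x l IH]; intros c; simpl. reflexivity.
  destruct (Nat.eqb c 1); simpl; now rewrite ?concat_prepend, IH.
Qed.

Lemma chunks_length l c : (1 <= c <= k)%nat ->
  (length (hd [] (chunks c l)) <= c)%nat /\ forall ch, In ch (chunks c l) -> (length ch <= k)%nat.
Proof.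
  revert c. induction l as [|x l IH]; intros c Hc; simpl.
  - split. lia. intros ch [<-|[]]. simpl. lia.
  - destruct (Nat.eqb_spec c 1) as [->|Hc1].
    + split. simpl. lia. destruct (IH k ltac:(lia)) as [_ Hall].
      intros ch [<-|Hch]; [simpl; lia|auto].
    + destruct (IH (c - 1)%nat ltac:(lia)) as [Hhd Hall].
      destruct (chunks (c - 1) l) as [|h t]; simpl in *.
      * split. lia. intros ch [<-|[]]. simpl. lia.
      * split. lia. intros ch [<-|Hch]; simpl; auto. specialize (Hall h (or_introl eq_refl)). lia.
Qed.

Lemma sol_cost_prepend_nil cs : sol_cost O (prepend [] cs) = sol_cost O cs.
Proof. destruct cs; unfold sol_cost; simpl; rewrite ?tour_cost_nil; lra. Qed.

Lemma sol_cost_chunks l c acc : (1 <= c)%nat ->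
  sol_cost O (prepend acc (chunks c l)) <= tour_cost O (acc ++ l) + 2 * cut_cost c l.
Proof.
  revert c acc. induction l as [|x l IH]; intros c acc Hc; cbn [chunks cut_cost].
  - unfold sol_cost. simpl. rewrite app_nil_r. lra.
  - destruct (Nat.eqb_spec c 1) as [->|Hc1].
    + pose proof (IH k [] Hk) as Hrest. rewrite sol_cost_prepend_nil in Hrest.
      pose proof (tour_cost_split O acc x l). unfold sol_cost in *. simpl in *. lra.
    + replace (prepend acc (prepend [x] (chunks (c - 1) l)))
        with (prepend (acc ++ [x]) (chunks (c - 1) l))
        by (destruct (chunks (c - 1) l); simpl; now rewrite <- ?app_assoc).
      specialize (IH (c - 1)%nat (acc ++ [x]) ltac:(lia)). now rewrite <- app_assoc in IH.
Qed.

(* Every point is a cut point for exactly one offset [c] in [1..k]. *)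
Lemma sum_cut_cost l : sumR (map (fun c => cut_cost c l) (seq 1 k)) = sumR (map (dist O) l).
Proof.
  assert (Hfirst : seq 1 k = 1%nat :: map S (seq 1 (k - 1))).
  { destruct k; [lia|]. simpl. now rewrite Nat.sub_0_r, seq_shift. }
  assert (Hlast : seq 1 k = seq 1 (k - 1) ++ [k]).
  { destruct k; [lia|]. rewrite seq_S. simpl. now rewrite Nat.sub_0_r. }
  induction l as [|x l IH].
  - rewrite (sumR_const _ 0). simpl. lra.
  - rewrite Hfirst. cbn [map fold_right cut_cost Nat.eqb]. rewrite map_map.
    rewrite (map_ext_in _ (fun c => cut_cost c l)).
    2: { intros c Hc. apply in_seq in Hc. destruct c as [|c]; [lia|reflexivity]. }
    rewrite <- IH, Hlast, map_app, sumR_app. simpl. lra.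
Qed.

Lemma tour_partition W c : NoDup W -> Permutation W c ->
  exists S, is_cvrp_solution W O k S /\
    sol_cost O S <= tour_cost O c + 2 / INR k * sumR (map (dist O) W).
Proof.
  intros HW Hp.
  destruct (exists_le_average _ (fun c0 => cut_cost c0 c) (seq 1 k)) as [c0 [Hc0 Havg]].
  { destruct k; [lia|discriminate]. }
  rewrite length_seq, sum_cut_cost, <- (sumR_perm _ _ (Permutation_map (dist O) Hp)) in Havg.
  apply in_seq in Hc0.
  exists (chunks c0 c). repeat split.
  - intros t Ht. exists t. repeat split; auto.
    + apply (NoDup_concat_in _ _ Ht). rewrite concat_chunks. exact (Permutation_NoDup Hp HW).
    + apply (chunks_length c c0 ltac:(lia)). exact Ht.
  - intros v Hv. apply (Permutation_in _ Hp) in Hv. rewrite <- (concat_chunks c c0) in Hv.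
    apply in_concat in Hv. destruct Hv as [t [Ht Hvt]]. eauto.
  - pose proof (sol_cost_chunks c c0 [] ltac:(lia)) as Hcost.
    rewrite sol_cost_prepend_nil in Hcost.
    assert (Hk0 : 0 < INR k) by (apply lt_0_INR; lia).
    apply (Rmult_le_compat_l (2 / INR k)) in Havg; [|apply Rlt_le, Rdiv_lt_0_compat; lra].
    replace (2 / INR k * (INR k * cut_cost c0 c)) with (2 * cut_cost c0 c) in Havg by (field; lra).
    simpl in Hcost. lra.
Qed.

Lemma approx_cost_le_walk alpha W S w : 0 <= alpha -> NoDup W ->
  is_approx_solution alpha W O k S -> incl W w ->
  sol_cost O S <= alpha * (tour_cost O w + 2 / INR k * sumR (map (dist O) W)).
Proof.
  intros Halpha HW [_ Happrox] Hcov.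
  destruct (shortcut_tour O W w HW Hcov) as [c [Hp Hc]].
  destruct (tour_partition W c HW Hp) as [S' [HS' Hcost]].
  eapply Rle_trans. apply (Happrox S' HS'). apply Rmult_le_compat_l; lra.
Qed.

End TourPartition.

(** * Joining arcs along a Lipschitz curve *)

(* An arc runs from [P src] through the points [arc_pts] to [P dst], for a curve [P] fixed by
   the context. *)
Record arc := Arc { arc_pts : list pt; arc_src : R; arc_dst : R }.

Definition arc_low (a : arc) : R := Rmin (arc_src a) (arc_dst a).
Definition arc_high (a : arc) : R := Rmax (arc_src a) (arc_dst a).

Lemma arc_low_le_high a : arc_low a <= arc_high a.
Proof. unfold arc_low, arc_high, Rmin, Rmax. destruct Rle_dec; lra. Qed.

Lemma arc_low_high_ordered a : arc_src a <= arc_dst a ->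
  arc_low a = arc_src a /\ arc_high a = arc_dst a.
Proof. intros H. unfold arc_low, arc_high. now rewrite Rmin_left, Rmax_right. Qed.

Lemma arc_within a L U : L <= arc_src a <= U -> L <= arc_dst a <= U ->
  L <= arc_low a /\ arc_high a <= U.
Proof. intros. split; [apply Rmin_glb|apply Rmax_lub]; lra. Qed.

Lemma arc_high_sub_low a : arc_high a - arc_low a = Rabs (arc_dst a - arc_src a).
Proof.
  unfold arc_low, arc_high, Rmin, Rmax, Rabs.
  destruct Rle_dec, Rcase_abs; lra.
Qed.

Section ArcsAlongCurve.
Variable P : R -> pt.
Hypothesis P_lipschitz : forall x y, dist (P x) (P y) <= Rabs (x - y).

Definition arc_path (a : arc) : list pt := P (arc_src a) :: arc_pts a ++ [P (arc_dst a)].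
Definition arc_len (a : arc) : R := path_len (arc_path a).
Definition arcs_len (A : list arc) : R := sumR (map arc_len A).

Definition arc_rev (a : arc) : arc := Arc (rev (arc_pts a)) (arc_dst a) (arc_src a).
Definition arc_orient (a : arc) : arc := if Rle_dec (arc_src a) (arc_dst a) then a else arc_rev a.
Definition arc_join (a b : arc) : arc :=
  Arc (arc_pts a ++ P (arc_dst a) :: P (arc_src b) :: arc_pts b) (arc_src a) (arc_dst b).

Lemma arc_len_rev a : arc_len (arc_rev a) = arc_len a.
Proof.
  unfold arc_len, arc_path, arc_rev. cbn [arc_pts arc_src arc_dst].
  rewrite <- (path_len_rev (P (arc_src a) :: _)). cbn [rev]. rewrite rev_app_distr.
  now cbn [rev app].
Qed.

Lemma arc_orient_spec a :
  arc_src (arc_orient a) = arc_low a /\ arc_dst (arc_orient a) = arc_high a /\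
  arc_len (arc_orient a) = arc_len a /\ incl (arc_pts a) (arc_pts (arc_orient a)).
Proof.
  unfold arc_orient, arc_low, arc_high.
  destruct (Rle_dec (arc_src a) (arc_dst a)) as [H|H].
  - rewrite Rmin_left, Rmax_right by lra. repeat split. apply incl_refl.
  - rewrite Rmin_right, Rmax_left by lra. repeat split. apply arc_len_rev.
    intros x. apply in_rev.
Qed.

Lemma arc_len_join a b :
  arc_len (arc_join a b) = arc_len a + dist (P (arc_dst a)) (P (arc_src b)) + arc_len b.
Proof.
  unfold arc_len, arc_path, arc_join. cbn [arc_pts arc_src arc_dst].
  rewrite <- app_assoc. cbn [app].
  rewrite app_comm_cons, path_len_app_cons, path_len_cons2. cbn [app]. lra.
Qed.

Lemma incl_arc_join a b :
  incl (arc_pts a) (arc_pts (arc_join a b)) /\ incl (arc_pts b) (arc_pts (arc_join a b)).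
Proof.
  split; intros x Hx; simpl; apply in_or_app; [now left|right; right; now right].
Qed.

Lemma arc_len_run acc v s t :
  arc_len (Arc (acc ++ [v]) s t) = path_len (P s :: acc ++ [v]) + dist v (P t).
Proof.
  unfold arc_len, arc_path. cbn [arc_pts arc_src arc_dst]. rewrite <- app_assoc.
  change (P s :: acc ++ [v] ++ [P t]) with ((P s :: acc) ++ v :: [P t]).
  rewrite path_len_app_cons. cbn [app path_len]. lra.
Qed.

Lemma cycle_len_arc_path a : cycle_len (arc_path a) <= arc_len a + (arc_high a - arc_low a).
Proof.
  unfold arc_len. rewrite (cycle_len_eq (P 0)) by discriminate.
  unfold arc_path at 2 3. rewrite app_comm_cons, last_last. simpl hd.
  rewrite arc_high_sub_low. apply Rplus_le_compat_l. apply P_lipschitz.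
Qed.

(* Join the two arcs [a] and [b] with the lowest low ends; the potential
   [arcs_len + 2 U - L1 - L2] of the recursion in [join_arcs] does not increase. *)
Lemma join_two_lowest a b L1 L2 U :
  L1 <= arc_low a -> arc_high a <= U -> arc_high b <= U -> arc_low a <= arc_low b ->
  L2 <= arc_high a -> L2 <= arc_low b ->
  exists m L1', L1' <= arc_low m /\ arc_high m <= U /\ L1' <= arc_low b /\
    arc_low b <= arc_high m /\
    arc_len m + 2 * U - L1' - arc_low b <= arc_len a + arc_len b + 2 * U - L1 - L2 /\
    incl (arc_pts a) (arc_pts m) /\ incl (arc_pts b) (arc_pts m).
Proof.
  intros HL1 HUa HUb Hab HL2a HL2b.
  destruct (arc_orient_spec a) as [Sa [Da [La Ia]]].
  destruct (arc_orient_spec b) as [Sb [Db [Lb Ib]]].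
  pose proof (arc_low_le_high a). pose proof (arc_low_le_high b).
  destruct (Rle_dec (arc_high a) (arc_low b)) as [Hsep|Hover].
  - (* [a] lies below [b]: go up along [a], then jump up to the start of [b]. *)
    set (m := arc_join (arc_orient a) (arc_orient b)).
    assert (Hsrc : arc_src m = arc_low a) by (unfold m; simpl; auto).
    assert (Hdst : arc_dst m = arc_high b) by (unfold m; simpl; auto).
    destruct (arc_low_high_ordered m) as [Hlow Hhigh]. { rewrite Hsrc, Hdst. lra. }
    exists m, (arc_low a). rewrite Hlow, Hhigh, Hsrc, Hdst. repeat split; try lra.
    + unfold m. rewrite arc_len_join, Da, Sb, La, Lb.
      pose proof (P_lipschitz (arc_high a) (arc_low b)).
      rewrite Rabs_minus_sym, Rabs_pos_eq in * by lra.
      lra.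
    + intros x Hx. apply (proj1 (incl_arc_join _ _)), Ia, Hx.
    + intros x Hx. apply (proj2 (incl_arc_join _ _)), Ib, Hx.
  - (* [a] overlaps [b]: go down along [a], then jump up to the start of [b]. *)
    set (m := arc_join (arc_rev (arc_orient a)) (arc_orient b)).
    assert (Hsrc : arc_src m = arc_high a) by (unfold m; simpl; auto).
    assert (Hdst : arc_dst m = arc_high b) by (unfold m; simpl; auto).
    assert (Hlow_high : arc_low b <= arc_low m /\ arc_high m <= U)
      by (apply arc_within; rewrite ?Hsrc, ?Hdst; lra).
    exists m, (arc_low b). repeat split; try lra.
    + pose proof (arc_low_le_high m). lra.
    + unfold m. rewrite arc_len_join, arc_len_rev. simpl arc_dst. rewrite Sa, Sb, La, Lb.
      pose proof (P_lipschitz (arc_low a) (arc_low b)).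
      rewrite Rabs_minus_sym, Rabs_pos_eq in * by lra.
      lra.
    + intros x Hx. apply (proj1 (incl_arc_join _ _)), (in_rev (arc_pts (arc_orient a))), Ia, Hx.
    + intros x Hx. apply (proj2 (incl_arc_join _ _)), Ib, Hx.
Qed.

Lemma arcs_len_perm A B : Permutation A B -> arcs_len A = arcs_len B.
Proof. intros H. apply sumR_perm, Permutation_map, H. Qed.

Definition above_but_one (L2 : R) (A : list arc) : Prop :=
  exists a0 rest, Permutation A (a0 :: rest) /\ L2 <= arc_high a0 /\
    forall a, In a rest -> L2 <= arc_low a.

Lemma above_but_one_lowest L2 A a b rest : above_but_one L2 A ->
  Permutation A (a :: b :: rest) -> arc_low a <= arc_low b ->
  L2 <= arc_high a /\ L2 <= arc_low b.
Proof.
  intros [a0 [rest0 [Hp0 [Ha0 Hrest0]]]] Hp Hab.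
  pose proof (arc_low_le_high a) as Ha.
  assert (Hp' : Permutation (a :: b :: rest) (a0 :: rest0)) by (rewrite <- Hp; exact Hp0).
  destruct (Permutation_in a Hp' (or_introl eq_refl)) as [<-|Hin].
  - split. exact Ha0. apply Hrest0, (Permutation_in b (Permutation_cons_inv Hp')). now left.
  - specialize (Hrest0 a Hin). lra.
Qed.

(* An Euler-tour argument on the parameter line: all arcs with ends in [[L1, U]] fit into one
   closed walk, at an extra cost of at most [2 U - L1 - L2]. *)
Lemma join_arcs n : forall A L1 L2 U, length A = S n ->
  (forall a, In a A -> L1 <= arc_low a /\ arc_high a <= U) -> above_but_one L2 A ->
  exists w, (forall a, In a A -> incl (arc_pts a) w) /\
    cycle_len w <= arcs_len A + 2 * U - L1 - L2.
Proof.
  induction n as [|n IH]; intros A L1 L2 U Hlen Hends Habove.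
  - destruct A as [|a [|]]; try discriminate.
    destruct Habove as [a0 [rest [Hp [Ha0 _]]]].
    apply Permutation_length_1_inv in Hp. injection Hp as -> ->.
    exists (arc_path a). split.
    + intros r [<-|[]] x Hx. right. apply in_or_app. now left.
    + destruct (Hends a (or_introl eq_refl)). pose proof (cycle_len_arc_path a).
      unfold arcs_len. cbn [map fold_right]. lra.
  - destruct (exists_min_perm _ arc_low A) as [a [R0 [HpA Ha]]]. { now destruct A. }
    destruct (exists_min_perm _ arc_low R0) as [b [R1 [HpR0 Hb]]].
    { intros ->. apply Permutation_length in HpA. simpl in *. lia. }
    assert (Hp : Permutation A (a :: b :: R1)) by (rewrite HpA; now apply perm_skip).
    assert (HinA : forall x, In x (a :: b :: R1) -> In x A)
      by (intros x Hx; exact (Permutation_in x (Permutation_sym Hp) Hx)).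
    destruct (Hends a (HinA a (or_introl eq_refl))) as [HL1a HUa].
    destruct (Hends b (HinA b (or_intror (or_introl eq_refl)))) as [_ HUb].
    assert (Hab : arc_low a <= arc_low b)
      by (apply Ha, (Permutation_in b (Permutation_sym HpR0)); now left).
    destruct (above_but_one_lowest L2 A a b R1 Habove Hp Hab) as [HL2a HL2b].
    destruct (join_two_lowest a b L1 L2 U) as [m [L1' [Hm1 [Hm2 [Hm3 [Hm4 [Hcost [Ia Ib]]]]]]]];
      auto.
    destruct (IH (m :: R1) L1' (arc_low b) U) as [w [Hcov Hw]].
    + apply Permutation_length in Hp. simpl in *. lia.
    + intros r [<-|Hr]. auto. specialize (Hb r Hr).
      destruct (Hends r (HinA r (or_intror (or_intror Hr)))). lra.
    + exists m, R1. repeat split; auto.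
    + exists w. split.
      * intros r Hr. apply (Permutation_in r Hp) in Hr. destruct Hr as [<-|[<-|Hr]].
        -- eapply incl_tran. apply Ia. apply Hcov. now left.
        -- eapply incl_tran. apply Ib. apply Hcov. now left.
        -- apply Hcov. now right.
      * rewrite (arcs_len_perm _ _ Hp). unfold arcs_len in *. simpl in *. lra.
Qed.

End ArcsAlongCurve.

(** * Rays and sector boundaries *)

Definition ray (O : pt) (phi rho : R) : pt := (fst O + rho * cos phi, snd O + rho * sin phi).

(* The boundary of the sector between the angles [g1 <= g2], as a curve through [O]: in along
   the ray [g1] for [t <= 0], then out along the ray [g2]. *)
Definition sector_boundary (O : pt) (g1 g2 t : R) : pt :=
  if Rlt_dec t 0 then ray O g1 (- t) else ray O g2 t.

Lemma ray_0 O phi : ray O phi 0 = O.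
Proof. unfold ray. destruct O; simpl. f_equal; ring. Qed.

Lemma dist_ray_ray O phi r r' : dist (ray O phi r) (ray O phi r') = Rabs (r - r').
Proof.
  unfold dist, ray; cbn [fst snd].
  replace ((fst O + r * cos phi - (fst O + r' * cos phi)) ^ 2
           + (snd O + r * sin phi - (snd O + r' * sin phi)) ^ 2)
    with ((r - r')² * ((sin phi)² + (cos phi)²)) by (unfold Rsqr; ring).
  rewrite sin2_cos2, Rmult_1_r. apply sqrt_Rsqr_abs.
Qed.

Lemma dist_center_ray O phi r : 0 <= r -> dist O (ray O phi r) = r.
Proof.
  intros Hr. rewrite <- (ray_0 O phi) at 1. rewrite dist_ray_ray, Rabs_minus_sym, Rminus_0_r.
  now apply Rabs_pos_eq.
Qed.

Lemma dist_opposite_rays O phi ra rb : 0 <= ra -> 0 <= rb ->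
  dist (ray O phi ra) (ray O (phi + PI) rb) = ra + rb.
Proof.
  intros Ha Hb. unfold dist, ray; cbn [fst snd]. rewrite neg_cos, neg_sin.
  replace ((fst O + ra * cos phi - (fst O + rb * - cos phi)) ^ 2
           + (snd O + ra * sin phi - (snd O + rb * - sin phi)) ^ 2)
    with ((ra + rb)² * ((sin phi)² + (cos phi)²)) by (unfold Rsqr; ring).
  rewrite sin2_cos2, Rmult_1_r. apply sqrt_Rsqr. lra.
Qed.

Lemma ray_sub_2PI O phi rho : ray O (phi - 2 * PI) rho = ray O phi rho.
Proof. unfold ray. rewrite cos_minus, sin_minus, cos_2PI, sin_2PI. f_equal; ring. Qed.

Lemma sector_boundary_pos O g1 g2 t : 0 <= t -> sector_boundary O g1 g2 t = ray O g2 t.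
Proof. intros Ht. unfold sector_boundary. destruct (Rlt_dec t 0). lra. reflexivity. Qed.

Lemma sector_boundary_neg O g1 g2 t : 0 <= t -> sector_boundary O g1 g2 (- t) = ray O g1 t.
Proof.
  intros Ht. unfold sector_boundary. destruct (Rlt_dec (- t) 0).
  - now rewrite Ropp_involutive.
  - replace t with 0 by lra. now rewrite Ropp_0, !ray_0.
Qed.

Lemma sector_boundary_0 O g1 g2 : sector_boundary O g1 g2 0 = O.
Proof. rewrite sector_boundary_pos by lra. apply ray_0. Qed.

Lemma sector_boundary_lipschitz O g1 g2 x y :
  dist (sector_boundary O g1 g2 x) (sector_boundary O g1 g2 y) <= Rabs (x - y).
Proof.
  unfold sector_boundary.
  destruct (Rlt_dec x 0) as [Hx|Hx]; destruct (Rlt_dec y 0) as [Hy|Hy].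
  - rewrite dist_ray_ray. replace (- x - - y) with (- (x - y)) by ring. rewrite Rabs_Ropp. lra.
  - pose proof (dist_triangle (ray O g1 (- x)) O (ray O g2 y)) as H.
    rewrite (dist_sym _ O), !dist_center_ray in H by lra. rewrite Rabs_left by lra. lra.
  - pose proof (dist_triangle (ray O g2 x) O (ray O g1 (- y))) as H.
    rewrite (dist_sym _ O), !dist_center_ray in H by lra. rewrite Rabs_right by lra. lra.
  - rewrite dist_ray_ray. lra.
Qed.

Definition lerp (a b : pt) (s : R) : pt :=
  (fst a + s * (fst b - fst a), snd a + s * (snd b - snd a)).

Lemma dist_lerp_l a b s : 0 <= s -> dist a (lerp a b s) = s * dist a b.
Proof.
  intros Hs. unfold dist, lerp; cbn [fst snd].
  replace ((fst a - (fst a + s * (fst b - fst a))) ^ 2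
           + (snd a - (snd a + s * (snd b - snd a))) ^ 2)
    with ((s * s) * ((fst a - fst b) ^ 2 + (snd a - snd b) ^ 2)) by ring.
  rewrite sqrt_mult_alt by nra. now rewrite sqrt_square by lra.
Qed.

Lemma dist_lerp_r a b s : s <= 1 -> dist (lerp a b s) b = (1 - s) * dist a b.
Proof.
  intros Hs. unfold dist, lerp; cbn [fst snd].
  replace ((fst a + s * (fst b - fst a) - fst b) ^ 2
           + (snd a + s * (snd b - snd a) - snd b) ^ 2)
    with (((1 - s) * (1 - s)) * ((fst a - fst b) ^ 2 + (snd a - snd b) ^ 2)) by ring.
  rewrite sqrt_mult_alt by nra. now rewrite sqrt_square by lra.
Qed.

Section SegmentMeetsRays.
Variables (O : pt) (ra rb al be : R).
Hypotheses (Hra : 0 < ra) (Hrb : 0 < rb) (Hab : 0 < be - al < PI).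

(* The ray at angle [phi] in [[al, be]] meets the segment from [ray O al ra] to [ray O be rb]
   at the point with barycentric weight [seg_param phi] and at distance [seg_radius phi] from [O]
   (the sine rule). *)
Let wa (phi : R) := ra * sin (phi - al).
Let wb (phi : R) := rb * sin (be - phi).
Let seg_param (phi : R) := wa phi / (wa phi + wb phi).
Let seg_radius (phi : R) := ra * rb * sin (be - al) / (wa phi + wb phi).

Let weights_nonneg phi : al <= phi <= be -> 0 <= wa phi /\ 0 <= wb phi /\ 0 < wa phi + wb phi.
Proof.
  intros [H1 H2]. unfold wa, wb.
  assert (0 <= sin (phi - al)) by (apply sin_ge_0; lra).
  assert (0 <= sin (be - phi)) by (apply sin_ge_0; lra).
  repeat split; try nra.
  destruct (Req_dec phi al) as [->|Hne].
  - replace (al - al) with 0 by ring. rewrite sin_0.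
    assert (0 < sin (be - al)) by (apply sin_gt_0; lra). nra.
  - assert (0 < sin (phi - al)) by (apply sin_gt_0; lra). nra.
Qed.

Let ray_meets_segment phi : al <= phi <= be ->
  ray O phi (seg_radius phi) = lerp (ray O al ra) (ray O be rb) (seg_param phi) /\
  0 <= seg_param phi <= 1 /\ 0 <= seg_radius phi <= Rmax ra rb.
Proof.
  intros Hphi. destruct (weights_nonneg phi Hphi) as [HA [HB HS]].
  assert (Hsab : 0 < sin (be - al)) by (apply sin_gt_0; lra).
  assert (0 <= sin (phi - al)) by (apply sin_ge_0; lra).
  assert (0 <= sin (be - phi)) by (apply sin_ge_0; lra).
  assert (Hsub : sin (be - al) <= sin (phi - al) + sin (be - phi)).
  { replace (be - al) with ((phi - al) + (be - phi)) by ring. rewrite sin_plus.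
    pose proof (COS_bound (be - phi)). pose proof (COS_bound (phi - al)). nra. }
  unfold seg_radius, seg_param. split; [|split; split].
  - unfold ray, lerp, wa, wb in *; simpl.
    rewrite !sin_minus in *. f_equal; field; lra.
  - apply Rmult_le_pos. lra. apply Rlt_le, Rinv_0_lt_compat, HS.
  - apply Rmult_le_reg_r with (wa phi + wb phi). exact HS.
    unfold Rdiv. rewrite Rmult_assoc, Rinv_l, Rmult_1_r by lra. lra.
  - apply Rmult_le_pos. apply Rmult_le_pos; [nra|lra]. apply Rlt_le, Rinv_0_lt_compat, HS.
  - apply Rmult_le_reg_r with (wa phi + wb phi). exact HS.
    unfold Rdiv. rewrite Rmult_assoc, Rinv_l, Rmult_1_r by lra.
    pose proof (Rmax_l ra rb). pose proof (Rmax_r ra rb). unfold wa, wb.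
    assert (ra * rb * sin (be - al) <= ra * rb * (sin (phi - al) + sin (be - phi)))
      by (apply Rmult_le_compat_l; nra).
    assert (rb * (ra * sin (phi - al)) <= Rmax ra rb * (ra * sin (phi - al)))
      by (apply Rmult_le_compat_r; nra).
    assert (ra * (rb * sin (be - phi)) <= Rmax ra rb * (rb * sin (be - phi)))
      by (apply Rmult_le_compat_r; nra).
    nra.
Qed.

Let seg_param_mono p1 p2 : al <= p1 -> p1 <= p2 -> p2 <= be -> seg_param p1 <= seg_param p2.
Proof.
  intros H1 H2 H3.
  destruct (weights_nonneg p1 ltac:(lra)) as [_ [_ S1]].
  destruct (weights_nonneg p2 ltac:(lra)) as [_ [_ S2]].
  unfold seg_param. apply Rmult_le_reg_r with ((wa p1 + wb p1) * (wa p2 + wb p2)). nra.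
  replace (wa p1 / (wa p1 + wb p1) * ((wa p1 + wb p1) * (wa p2 + wb p2)))
    with (wa p1 * (wa p2 + wb p2)) by (field; lra).
  replace (wa p2 / (wa p2 + wb p2) * ((wa p1 + wb p1) * (wa p2 + wb p2)))
    with (wa p2 * (wa p1 + wb p1)) by (field; lra).
  assert (E : wa p2 * wb p1 - wa p1 * wb p2 = ra * rb * sin (be - al) * sin (p2 - p1))
    by (unfold wa, wb; rewrite !sin_minus; ring).
  assert (0 < sin (be - al)) by (apply sin_gt_0; lra).
  assert (0 <= sin (p2 - p1)) by (apply sin_ge_0; lra).
  assert (0 <= ra * rb * sin (be - al) * sin (p2 - p1)).
  { apply Rmult_le_pos; [|lra]. apply Rmult_le_pos; [nra|lra]. }
  nra.
Qed.

(* The segment meets the rays at [p1 <= p2] in this order, so cutting it out between them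
   leaves two pieces no longer than the segment. *)
Lemma segment_meets_rays p1 p2 : al <= p1 -> p1 <= p2 -> p2 <= be ->
  exists r1 r2, 0 <= r1 <= Rmax ra rb /\ 0 <= r2 <= Rmax ra rb /\
    dist (ray O al ra) (ray O p1 r1) + dist (ray O p2 r2) (ray O be rb)
      <= dist (ray O al ra) (ray O be rb).
Proof.
  intros H1 H2 H3.
  destruct (ray_meets_segment p1 ltac:(lra)) as [E1 [S1 R1]].
  destruct (ray_meets_segment p2 ltac:(lra)) as [E2 [S2 R2]].
  exists (seg_radius p1), (seg_radius p2). split. exact R1. split. exact R2.
  rewrite E1, E2, dist_lerp_l, dist_lerp_r by lra.
  pose proof (seg_param_mono p1 p2 H1 H2 H3).
  pose proof (dist_nonneg (ray O al ra) (ray O be rb)). nra.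
Qed.

End SegmentMeetsRays.

(* A segment between points in two sectors [[g1, g2] <= [d1, d2]] of angles in [[0, 2 PI]]
   leaves the first sector and enters the second one through their boundaries: either
   directly (angle difference below [PI]), through [O] (difference [PI]), or around the other
   side, through the rays [g1] and [d2] (difference above [PI]). *)
Lemma cut_segment_at_sectors O ra rb tha thb g1 g2 d1 d2 R :
  0 <= ra <= R -> 0 <= rb <= R -> 0 <= g1 -> g1 <= tha -> tha <= g2 -> g2 <= d1 ->
  d1 <= thb -> thb <= d2 -> d2 <= 2 * PI -> thb < 2 * PI ->
  exists ta tb, -R <= ta <= R /\ -R <= tb <= R /\
    dist (ray O tha ra) (sector_boundary O g1 g2 ta)
    + dist (sector_boundary O d1 d2 tb) (ray O thb rb)
      <= dist (ray O tha ra) (ray O thb rb).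
Proof.
  intros Ha Hb H1 H2 H3 H4 H5 H6 H7 H8.
  destruct (Req_dec ra 0) as [->|Ha0].
  { exists 0, 0. rewrite !sector_boundary_0, ray_0, dist_refl. lra. }
  destruct (Req_dec rb 0) as [->|Hb0].
  { exists 0, 0. rewrite !sector_boundary_0, ray_0, dist_refl. lra. }
  assert (Hmax : Rmax ra rb <= R /\ Rmax rb ra <= R) by (split; apply Rmax_lub; lra).
  destruct (Req_dec tha thb) as [Heq|Hne].
  { exists ra, (- rb). rewrite sector_boundary_pos, sector_boundary_neg by lra.
    replace g2 with tha by lra. replace d1 with thb by lra. rewrite !dist_refl.
    pose proof (dist_nonneg (ray O tha ra) (ray O thb rb)). repeat split; lra. }
  destruct (Rlt_dec (thb - tha) PI) as [Hlt|Hge].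
  { destruct (segment_meets_rays O ra rb tha thb ltac:(lra) ltac:(lra) ltac:(lra) g2 d1)
      as [r1 [r2 [Hr1 [Hr2 Hd]]]]; try lra.
    exists r1, (- r2). rewrite sector_boundary_pos, sector_boundary_neg by lra.
    repeat split; lra. }
  destruct (Req_dec (thb - tha) PI) as [Hpi|Hgt].
  { exists 0, 0. rewrite !sector_boundary_0. replace thb with (tha + PI) by lra.
    rewrite dist_opposite_rays, dist_sym, !dist_center_ray by lra. repeat split; lra. }
  destruct (segment_meets_rays O rb ra (thb - 2 * PI) tha ltac:(lra) ltac:(lra) ltac:(lra)
              (d2 - 2 * PI) g1) as [r1 [r2 [Hr1 [Hr2 Hd]]]]; try lra.
  rewrite !ray_sub_2PI in Hd.
  exists (- r2), r1. rewrite sector_boundary_neg, sector_boundary_pos by lra.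
  rewrite !(dist_sym (ray O thb rb)), (dist_sym (ray O tha ra) (ray O g1 r2)) in *.
  repeat split; lra.
Qed.

(** * The groups of the sweep *)

Fixpoint index_of (x : pt) (l : list pt) : nat :=
  match l with [] => 0%nat | y :: l' => if pt_eq_dec x y then 0%nat else S (index_of x l') end.

Lemma index_of_spec d x l : In x l -> nth (index_of x l) l d = x /\ (index_of x l < length l)%nat.
Proof.
  induction l as [|y l IH]; simpl. intros [].
  intros H. destruct (pt_eq_dec x y) as [->|ne]. split; [reflexivity|lia].
  destruct H as [->|H]. congruence. destruct (IH H). split. assumption. lia.
Qed.

Lemma index_of_nth d l j : NoDup l -> (j < length l)%nat -> index_of (nth j l d) l = j.
Proof.
  revert j. induction l as [|y l IH]; intros j Hl Hj; simpl in *. lia.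
  inversion Hl as [|? ? Hy Hl']; subst. destruct j as [|j].
  - destruct (pt_eq_dec y y); congruence.
  - destruct (pt_eq_dec (nth j l d) y) as [E|ne].
    + exfalso. apply Hy. rewrite <- E. apply nth_In. lia.
    + f_equal. apply IH; auto. lia.
Qed.

Lemma StronglySorted_nth {A} (R : A -> A -> Prop) d l : StronglySorted R l ->
  forall i j, (i < j < length l)%nat -> R (nth i l d) (nth j l d).
Proof.
  induction l as [|a l IH]; intros Hs i j Hij; simpl in *. lia.
  inversion Hs as [|? ? Hl Ha]; subst. rewrite Forall_forall in Ha.
  destruct i as [|i]; destruct j as [|j]; try lia.
  - apply Ha, nth_In. lia.
  - apply IH; auto; lia.
Qed.

Lemma ceil_div_spec n N : (1 <= N)%nat ->
  (n <= ceil_div n N * N)%nat /\ forall i, (i < ceil_div n N)%nat <-> (i * N < n)%nat.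
Proof.
  intros HN. unfold ceil_div.
  pose proof (Nat.div_mod_eq (n + N - 1) N). pose proof (Nat.mod_upper_bound (n + N - 1) N).
  split. nia. intros i. split; intros; nia.
Qed.

Section Groups.
Variables (u : list pt) (theta : pt -> R) (N : nat).
Hypotheses (HN : (1 <= N)%nat) (Hnodup : NoDup u)
  (Hsorted : StronglySorted (fun a b => theta a <= theta b) u)
  (Htheta : forall x, In x u -> 0 <= theta x < 2 * PI).

Let m := ceil_div (length u) N.
Let d := (0, 0) : pt.

Lemma theta_nth_mono i j : (i <= j < length u)%nat -> theta (nth i u d) <= theta (nth j u d).
Proof.
  intros Hij. destruct (Nat.eq_dec i j) as [->|Hne]. lra.
  apply (StronglySorted_nth _ d u Hsorted). lia.
Qed.

(* [group_angle i] separates the sectors of group [i] and group [i + 1]: it is the angle of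
   the last terminal of group [i]. *)
Definition group_angle (i : nat) : R :=
  if Nat.eqb i 0 then 0 else if Nat.leb m i then 2 * PI else theta (nth (i * N - 1) u d).

Definition group_of (v : pt) : nat := (index_of v u / N + 1)%nat.

Lemma group_angle_range i : 0 <= group_angle i <= 2 * PI.
Proof.
  pose proof PI_RGT_0. unfold group_angle.
  destruct (Nat.eqb i 0). lra. destruct (Nat.leb_spec m i). lra.
  destruct (ceil_div_spec (length u) N HN) as [_ Hm]. apply Hm in H0.
  assert (Hin : In (nth (i * N - 1) u d) u) by (apply nth_In; lia).
  specialize (Htheta _ Hin). lra.
Qed.

Lemma group_of_range v : In v u -> (1 <= group_of v <= m)%nat.
Proof.
  intros Hv. destruct (index_of_spec d v u Hv) as [_ Hp]. unfold group_of.
  destruct (ceil_div_spec (length u) N HN) as [_ Hm].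
  pose proof (Nat.div_mod_eq (index_of v u) N). pose proof (Nat.mod_upper_bound (index_of v u) N).
  assert (index_of v u / N < m)%nat by (apply Hm; nia). lia.
Qed.

Lemma group_of_theta v : In v u ->
  group_angle (group_of v - 1) <= theta v <= group_angle (group_of v).
Proof.
  intros Hv. destruct (index_of_spec d v u Hv) as [Ev Hp]. unfold group_of.
  destruct (ceil_div_spec (length u) N HN) as [_ Hm].
  pose proof (Nat.div_mod_eq (index_of v u) N). pose proof (Nat.mod_upper_bound (index_of v u) N).
  set (p := index_of v u) in *. set (q := (p / N)%nat) in *.
  assert (Hq : (q < m)%nat) by (apply Hm; nia).
  replace (q + 1 - 1)%nat with q by lia. split; unfold group_angle.
  - destruct (Nat.eqb_spec q 0). apply Htheta, Hv.
    destruct (Nat.leb_spec m q). lia. rewrite <- Ev. apply theta_nth_mono. nia.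
  - destruct (Nat.eqb_spec (q + 1) 0). lia.
    destruct (Nat.leb_spec m (q + 1)). specialize (Htheta v Hv). lra.
    rewrite <- Ev. apply theta_nth_mono.
    assert ((q + 1) * N < length u)%nat by (apply Hm; lia). nia.
Qed.

Lemma group_angle_mono i j : (1 <= i < j)%nat -> (j <= m)%nat ->
  group_angle i <= group_angle (j - 1).
Proof.
  intros Hij Hj. destruct (ceil_div_spec (length u) N HN) as [_ Hm]. unfold group_angle.
  destruct (Nat.eqb_spec i 0). lia. destruct (Nat.eqb_spec (j - 1) 0). lia.
  destruct (Nat.leb_spec m i). lia. destruct (Nat.leb_spec m (j - 1)). lia.
  apply theta_nth_mono. assert ((j - 1) * N < length u)%nat by (apply Hm; lia). nia.
Qed.

Lemma in_group v i : (1 <= i)%nat -> In v (group u N i) -> group_of v = i /\ In v u.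
Proof.
  intros Hi Hv. unfold group in Hv.
  destruct (In_nth _ _ d Hv) as [q [Hq Eq]].
  rewrite length_firstn, length_skipn in Hq.
  rewrite nth_firstn in Eq. destruct (Nat.ltb_spec q N); [|lia].
  rewrite nth_skipn in Eq. subst v. split.
  - unfold group_of. rewrite index_of_nth by (auto; lia).
    rewrite Nat.div_add_l, Nat.div_small by lia. lia.
  - apply nth_In. lia.
Qed.

Lemma group_nodup i : NoDup (group u N i).
Proof.
  unfold group. pose proof Hnodup as H.
  rewrite <- (firstn_skipn ((i - 1) * N) u), <- (firstn_skipn N (skipn ((i - 1) * N) u)) in H.
  apply NoDup_app_remove_l, NoDup_app_remove_r in H. exact H.
Qed.

Lemma concat_blocks {A} n (l : list A) : (length l <= n * N)%nat ->
  concat (map (fun i => firstn N (skipn (i * N) l)) (seq 0 n)) = l.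
Proof.
  revert l. induction n as [|n IH]; intros l Hl.
  - destruct l; simpl in *; [reflexivity|lia].
  - rewrite <- cons_seq, <- seq_shift. cbn [map concat]. rewrite map_map, skipn_O.
    rewrite (map_ext _ (fun i => firstn N (skipn (i * N) (skipn N l)))).
    + rewrite IH. apply firstn_skipn. rewrite length_skipn. simpl in Hl. lia.
    + intros i. rewrite skipn_skipn. do 2 f_equal. simpl. lia.
Qed.

Lemma concat_groups : concat (map (group u N) (seq 1 m)) = u.
Proof.
  rewrite <- seq_shift, map_map. unfold group.
  rewrite (map_ext _ (fun i => firstn N (skipn (i * N) u))).
  - apply concat_blocks. apply ceil_div_spec, HN.
  - intros i. simpl. now rewrite Nat.sub_0_r.
Qed.

Lemma sum_over_groups (f : pt -> R) :
  sumR (map (fun i => sumR (map f (group u N i))) (seq 1 m)) = sumR (map f u).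
Proof.
  rewrite <- (map_map (group u N) (fun l => sumR (map f l))), <- map_map, <- sumR_concat,
    <- concat_map, concat_groups. reflexivity.
Qed.

End Groups.

(** * A closed walk through the depot for every group *)

Section CutTour.
Variables (V : list pt) (g : pt -> nat) (boundary : nat -> R -> pt) (D : R).
Hypothesis cut_edge : forall v w, In v V -> In w V -> g v <> g w ->
  exists tv tw, -D <= tv <= D /\ -D <= tw <= D /\
    dist v (boundary (g v) tv) + dist (boundary (g w) tw) w <= dist v w.

(* An arc tagged [i] has its ends on [boundary i]. *)
Definition tagged_len (PS : list (arc * nat)) : R :=
  sumR (map (fun q => arc_len (boundary (snd q)) (fst q)) PS).

Let run_group acc v : (forall x, In x acc -> g x = g v) ->
  forall x, In x (acc ++ [v]) -> g x = g v.
Proof. intros Hacc x Hx. apply in_app_or in Hx. destruct Hx as [Hx|[<-|[]]]; auto. Qed.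

(* Walking along [acc ++ v1 :: l], the current arc started on the boundary of the sector
   [g v1] at parameter [ts]; the walk is closed off at parameter [te]. *)
Lemma cut_tour l : forall v1 acc ts te, incl (v1 :: l) V ->
  (forall x, In x acc -> g x = g v1) -> -D <= ts <= D -> -D <= te <= D ->
  exists PS : list (arc * nat),
    (forall a i, In (a, i) PS -> -D <= arc_low a /\ arc_high a <= D) /\
    (forall a i, In (a, i) PS -> exists x, In x V /\ g x = i) /\
    (forall x, In x (acc ++ v1 :: l) -> exists a, In (a, g x) PS /\ In x (arc_pts a)) /\
    tagged_len PS <= path_len (boundary (g v1) ts :: acc ++ v1 :: l)
      + dist (last l v1) (boundary (g (last l v1)) te).
Proof.
  induction l as [|w l IH]; intros v1 acc ts te HV Hacc Hts Hte.
  - set (a := Arc (acc ++ [v1]) ts te).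
    exists [(a, g v1)]. split; [|split; [|split]].
    + intros a' i [E|[]]. injection E as <- _. apply arc_within; simpl; lra.
    + intros a' i [E|[]]. injection E as _ <-. exists v1. split; [apply HV; now left|reflexivity].
    + intros x Hx. exists a. split; [left|exact Hx]. now rewrite (run_group acc v1 Hacc x Hx).
    + unfold tagged_len. cbn [map fold_right fst snd last]. subst a. rewrite arc_len_run. lra.
  - assert (HVl : incl (w :: l) V) by (intros x Hx; apply HV; now right).
    rewrite last_cons_default.
    destruct (Nat.eq_dec (g v1) (g w)) as [Hsame|Hchange].
    + destruct (IH w (acc ++ [v1]) ts te HVl) as [PS [H1 [H2 [H3 H4]]]]; auto.
      { rewrite <- Hsame. apply run_group, Hacc. }
      exists PS. split; [|split; [|split]]; auto.
      * intros x Hx. apply H3. now rewrite <- app_assoc.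
      * rewrite <- Hsame, <- app_assoc in H4. exact H4.
    + destruct (cut_edge v1 w) as [tv [tw [Htv [Htw Hcut]]]]; auto.
      { apply HV. now left. } { apply HV. right. now left. }
      destruct (IH w [] tw te HVl) as [PS [H1 [H2 [H3 H4]]]]; auto.
      { intros x []. }
      set (a := Arc (acc ++ [v1]) ts tv).
      exists ((a, g v1) :: PS). split; [|split; [|split]].
      * intros a' i [E|Hin]. injection E as <- _. apply arc_within; simpl; lra. eauto.
      * intros a' i [E|Hin]; [|eauto].
        injection E as _ <-. exists v1. split; [apply HV; now left|reflexivity].
      * intros x Hx. replace (acc ++ v1 :: w :: l) with ((acc ++ [v1]) ++ w :: l) in Hx
          by now rewrite <- app_assoc.
        apply in_app_or in Hx. destruct Hx as [Hx|Hx].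
        -- exists a. split; [left|exact Hx]. now rewrite (run_group acc v1 Hacc x Hx).
        -- destruct (H3 x Hx) as [a' [Ha' Hx']]. exists a'. split; [now right|exact Hx'].
      * unfold tagged_len in *. cbn [map fold_right fst snd app] in *. subst a. rewrite arc_len_run.
        change (boundary (g v1) ts :: acc ++ v1 :: w :: l)
          with ((boundary (g v1) ts :: acc) ++ v1 :: w :: l).
        rewrite path_len_app_cons, path_len_cons2. rewrite path_len_cons2 in H4. cbn [app]. lra.
Qed.

End CutTour.

Lemma split_at_change {A} (f : A -> nat) l x y : In x l -> In y l -> f x <> f y ->
  exists l1 a b l2, l = l1 ++ a :: b :: l2 /\ f a <> f b.
Proof.
  revert x y. induction l as [|a [|b l] IH]; intros x y Hx Hy Hxy.
  - destruct Hx.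
  - destruct Hx as [<-|[]], Hy as [<-|[]]. congruence.
  - destruct (Nat.eq_dec (f a) (f b)) as [Hab|Hab].
    + assert (Hz : exists z, In z (b :: l) /\ f z <> f b).
      { destruct (Nat.eq_dec (f x) (f b)) as [Hxb|Hxb].
        - exists y. split; [|congruence]. destruct Hy as [<-|Hy]; [congruence|exact Hy].
        - exists x. split; [|exact Hxb]. destruct Hx as [<-|Hx]; [congruence|exact Hx]. }
      destruct Hz as [z [Hz Hzb]].
      destruct (IH b z (or_introl eq_refl) Hz (not_eq_sym Hzb)) as [l1 [a' [b' [l2 [E H]]]]].
      exists (a :: l1), a', b', l2. rewrite E. split; [reflexivity|exact H].
    + exists [], a, b, l. split; [reflexivity|exact Hab].
Qed.

Lemma rotate_at_change (f : pt -> nat) p x y : In x p -> In y p -> f x <> f y ->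
  exists a b l, Permutation p (b :: l ++ [a]) /\ cycle_len (b :: l ++ [a]) = cycle_len p /\
    f a <> f b.
Proof.
  intros Hx Hy Hxy. destruct (split_at_change f p x y Hx Hy Hxy) as [l1 [a [b [l2 [-> Hab]]]]].
  exists a, b, (l2 ++ l1). rewrite <- app_assoc, app_comm_cons.
  split; [|split; [|exact Hab]].
  - replace (l1 ++ a :: b :: l2) with ((l1 ++ [a]) ++ b :: l2) by now rewrite <- app_assoc.
    apply Permutation_app_comm.
  - rewrite cycle_len_rotate, <- app_assoc. reflexivity.
Qed.

Lemma sumR_indicator_seq t c a n : (a <= t < a + n)%nat ->
  sumR (map (fun i => if Nat.eqb t i then c else 0) (seq a n)) = c.
Proof.
  revert a. induction n as [|n IH]; intros a Ht. lia.
  cbn [seq map fold_right]. destruct (Nat.eqb_spec t a) as [->|Hne].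
  - rewrite (map_ext_in _ (fun _ => 0)), sumR_const. lra.
    intros i Hi. apply in_seq in Hi. destruct (Nat.eqb_spec a i); [lia|reflexivity].
  - rewrite IH by lia. lra.
Qed.

Lemma sumR_by_tag {A} (tag : A -> nat) (f : A -> R) l m :
  (forall q, In q l -> (1 <= tag q <= m)%nat) ->
  sumR (map (fun i => sumR (map f (filter (fun q => Nat.eqb (tag q) i) l))) (seq 1 m))
  = sumR (map f l).
Proof.
  induction l as [|q l IH]; intros Htag.
  - rewrite (sumR_const _ 0). simpl. lra.
  - rewrite (map_ext _ (fun i => (if Nat.eqb (tag q) i then f q else 0)
                                 + sumR (map f (filter (fun q => Nat.eqb (tag q) i) l)))).
    + specialize (Htag q (or_introl eq_refl)) as Hq.
      rewrite sumR_plus, sumR_indicator_seq, IH by (auto with datatypes; lia). reflexivity.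
    + intros i. simpl. destruct (Nat.eqb (tag q) i); simpl; lra.
Qed.

Lemma polar_ray O V theta v : is_polar_angle O V theta -> In v V ->
  v = ray O (theta v) (dist O v).
Proof.
  intros H Hv. destruct (H v Hv) as [_ [E1 E2]]. unfold ray. rewrite <- E1, <- E2.
  now destruct v.
Qed.

Section SectorWalks.
Variables (O : pt) (V u : list pt) (theta : pt -> R) (N : nat) (D T0 : R) (p : list pt).
Hypotheses (HN : (1 <= N)%nat) (HV : NoDup V) (Hperm : Permutation V u)
  (Hsorted : StronglySorted (fun a b => theta a <= theta b) u)
  (Hpolar : is_polar_angle O V theta) (HD : forall v, In v V -> dist O v <= D) (HD0 : 0 <= D)
  (Hp : Permutation V p) (HT0 : cycle_len p = T0).

Let m := ceil_div (length u) N.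
Let g := group_of u N.
Let boundary (i : nat) : R -> pt :=
  sector_boundary O (group_angle u theta N (i - 1)) (group_angle u theta N i).
Let arcs_of (PS : list (arc * nat)) (i : nat) : list arc :=
  map fst (filter (fun q => Nat.eqb (snd q) i) PS).

Let nodup_u : NoDup u := Permutation_NoDup Hperm HV.

Let in_u v : In v V -> In v u.
Proof. apply Permutation_in, Hperm. Qed.

Let theta_range v : In v u -> 0 <= theta v < 2 * PI.
Proof. intros Hv. apply Hpolar, (Permutation_in v (Permutation_sym Hperm) Hv). Qed.

Lemma sector_cut_edge v w : In v V -> In w V -> g v <> g w ->
  exists tv tw, -D <= tv <= D /\ -D <= tw <= D /\
    dist v (boundary (g v) tv) + dist (boundary (g w) tw) w <= dist v w.
Proof.
  assert (Hlt : forall v w, In v V -> In w V -> (g v < g w)%nat ->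
    exists tv tw, -D <= tv <= D /\ -D <= tw <= D /\
      dist v (boundary (g v) tv) + dist (boundary (g w) tw) w <= dist v w).
  { clear v w. intros v w Hv Hw Hvw.
    pose proof (group_of_theta u theta N HN Hsorted theta_range v (in_u v Hv)).
    pose proof (group_of_theta u theta N HN Hsorted theta_range w (in_u w Hw)).
    pose proof (group_of_range u N HN v (in_u v Hv)).
    pose proof (group_of_range u N HN w (in_u w Hw)).
    pose proof (group_angle_mono u theta N HN Hsorted (g v) (g w)
      ltac:(unfold g in *; lia) ltac:(unfold g, m in *; lia)).
    pose proof (group_angle_range u theta N HN theta_range (g v - 1)).
    pose proof (group_angle_range u theta N HN theta_range (g w)).
    pose proof (theta_range w (in_u w Hw)).
    destruct (cut_segment_at_sectors O (dist O v) (dist O w) (theta v) (theta w)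
      (group_angle u theta N (g v - 1)) (group_angle u theta N (g v))
      (group_angle u theta N (g w - 1)) (group_angle u theta N (g w)) D
      (conj (dist_nonneg O v) (HD v Hv)) (conj (dist_nonneg O w) (HD w Hw)))
      as [tv [tw Hcut]]; try (unfold g, m in *; lia || lra).
    rewrite <- (polar_ray O V theta v Hpolar Hv), <- (polar_ray O V theta w Hpolar Hw) in Hcut.
    exists tv, tw. exact Hcut. }
  intros Hv Hw Hvw. destruct (Nat.lt_gt_cases (g v) (g w)) as [[Hless|Hmore] _]. exact Hvw.
  - apply Hlt; auto.
  - destruct (Hlt w v Hw Hv Hmore) as [tw [tv [Htw [Htv Hcut]]]].
    exists tv, tw. rewrite (dist_sym v w), (dist_sym v), (dist_sym _ w). lra.
Qed.

Lemma tour_arcs : (2 <= m)%nat -> exists PS,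
  (forall a i, In (a, i) PS -> -D <= arc_low a /\ arc_high a <= D) /\
  (forall a i, In (a, i) PS -> (1 <= i <= m)%nat) /\
  (forall x, In x V -> exists a, In (a, g x) PS /\ In x (arc_pts a)) /\
  tagged_len boundary PS <= T0.
Proof.
  intros Hm2. set (d := (0, 0) : pt).
  destruct (ceil_div_spec (length u) N HN) as [_ Hm].
  assert (HNu : (N < length u)%nat) by (assert (1 * N < length u)%nat by (apply Hm; lia); lia).
  assert (Hin_p : forall j, (j < length u)%nat -> In (nth j u d) p).
  { intros j Hj.
    apply (Permutation_in _ Hp), (Permutation_in _ (Permutation_sym Hperm)), nth_In, Hj. }
  assert (Hchange : g (nth 0 u d) <> g (nth N u d)).
  { unfold g, group_of. rewrite !index_of_nth by (apply nodup_u || lia).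
    rewrite Nat.Div0.div_0_l, Nat.div_same by lia. lia. }
  destruct (rotate_at_change g p _ _ (Hin_p 0%nat ltac:(lia)) (Hin_p N HNu) Hchange)
    as [a [b [l [Hrot [Hcycle Hab]]]]].
  rewrite HT0 in Hcycle.
  assert (HV' : incl (b :: l ++ [a]) V)
    by (intros x Hx; apply (Permutation_in _ (Permutation_sym (Permutation_trans Hp Hrot))), Hx).
  destruct (sector_cut_edge a b) as [te [ts [Hte [Hts Hcut]]]]; auto.
  { apply HV'. right. apply in_or_app. right. now left. }
  { apply HV'. now left. }
  destruct (cut_tour V g boundary D sector_cut_edge (l ++ [a]) b [] ts te HV')
    as [PS [H1 [H2 [H3 H4]]]]; auto.
  { intros x []. }
  exists PS. split; [|split; [|split]].
  - exact H1.
  - intros a' i Hq. destruct (H2 a' i Hq) as [x [Hx <-]]. apply group_of_range; auto.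
  - intros x Hx. apply H3. apply (Permutation_in _ (Permutation_trans Hp Hrot)), Hx.
  - rewrite last_last in H4. cbn [app] in H4. rewrite path_len_cons2 in H4.
    rewrite <- Hcycle, (cycle_len_eq b) by discriminate.
    rewrite app_comm_cons, last_last. cbn [hd app]. rewrite (dist_sym a b) in *. lra.
Qed.

(* The arcs of one group are joined along the boundary of its sector, together with the
   one-point arc at [O] so that the walk passes through the depot. *)
Lemma group_walk PS i :
  (forall a j, In (a, j) PS -> -D <= arc_low a /\ arc_high a <= D) ->
  (forall x, In x V -> exists a, In (a, g x) PS /\ In x (arc_pts a)) -> (1 <= i)%nat ->
  exists w, incl (group u N i) w /\
    tour_cost O w <= arcs_len (boundary i) (arcs_of PS i) + 4 * D.
Proof.
  intros Hends Hcover Hi.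
  set (depot := Arc [O] 0 0).
  assert (Hdepot : arc_low depot = 0 /\ arc_high depot = 0)
    by (unfold arc_low, arc_high; simpl; rewrite Rmin_left, Rmax_left by lra; auto).
  assert (Hof : forall a, In a (arcs_of PS i) -> In (a, i) PS).
  { intros a Ha. unfold arcs_of in Ha. apply in_map_iff in Ha. destruct Ha as [[a' j] [<- Hq]].
    apply filter_In in Hq. destruct Hq as [Hq Hj]. apply Nat.eqb_eq in Hj. simpl in Hj.
    now subst j. }
  destruct (join_arcs (boundary i) (sector_boundary_lipschitz _ _ _) (length (arcs_of PS i))
              (depot :: arcs_of PS i) (-D) (-D) D) as [w [Hw Hcost]].
  - reflexivity.
  - intros a [<-|Ha]. lra. eapply Hends, Hof, Ha.
  - exists depot, (arcs_of PS i). split; [reflexivity|split; [lra|]].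
    intros a Ha. eapply Hends, Hof, Ha.
  - destruct (tour_cost_rotate_depot O w) as [w' [Hww' Hw']].
    { apply (Hw depot). now left. now left. }
    exists w'. split.
    + intros x Hx. destruct (in_group u N HN nodup_u x i Hi Hx) as [Hgx Hxu].
      assert (HxV : In x V) by exact (Permutation_in x (Permutation_sym Hperm) Hxu).
      destruct (Hcover x HxV) as [a [Ha Hxa]]. apply Hww', (Hw a), Hxa. right.
      apply in_map_iff. exists (a, g x). split. reflexivity.
      apply filter_In. split. exact Ha. apply Nat.eqb_eq. exact Hgx.
    + rewrite Hw'. unfold arcs_len in *. cbn [map fold_right] in Hcost.
      replace (arc_len (boundary i) depot) with 0 in Hcost. lra.
      unfold arc_len, arc_path, depot, boundary. cbn [arc_pts arc_src arc_dst app].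
      rewrite sector_boundary_0, !path_len_cons2, dist_refl. simpl. lra.
Qed.

Lemma sector_walks : exists X : nat -> R,
  (forall i, (1 <= i <= m)%nat -> exists w, incl (group u N i) w /\ tour_cost O w <= X i) /\
  sumR (map X (seq 1 m)) <= T0 + 4 * D * INR m.
Proof.
  pose proof (cycle_len_nonneg p) as HT0pos. rewrite HT0 in HT0pos.
  destruct (Nat.lt_ge_cases m 2) as [Hm|Hm].
  - destruct (Nat.eq_dec m 0) as [Hm0|Hm1].
    { exists (fun _ => 0). split. intros i Hi. lia. rewrite Hm0. simpl. lra. }
    exists (fun _ => T0 + 2 * D). split.
    + intros i Hi. exists p. split.
      * intros x Hx. destruct (in_group u N HN nodup_u x i ltac:(lia) Hx) as [_ Hxu].
        apply (Permutation_in _ Hp), (Permutation_in _ (Permutation_sym Hperm)), Hxu.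
      * destruct p as [|a p'] eqn:Ep.
        { exfalso. apply Hm1. unfold m.
          rewrite <- (Permutation_length Hperm), (Permutation_length Hp). unfold ceil_div. simpl.
          apply Nat.div_small. lia. }
        rewrite <- HT0. eapply Rle_trans. apply (tour_cost_le_cycle O a). discriminate.
        pose proof (HD a (Permutation_in a (Permutation_sym Hp) (or_introl eq_refl))).
        simpl. lra.
    + replace m with 1%nat by lia. simpl. lra.
  - destruct (tour_arcs Hm) as [PS [Hends [Htags [Hcover Hlen]]]].
    exists (fun i => arcs_len (boundary i) (arcs_of PS i) + 4 * D). split.
    + intros i Hi. apply group_walk; auto. lia.
    + rewrite sumR_plus, sumR_const, length_seq.
      rewrite (map_ext_in _ (fun i => sumR (map (fun q => arc_len (boundary (snd q)) (fst q))
                                             (filter (fun q => Nat.eqb (snd q) i) PS)))).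
      * unfold tagged_len in Hlen. rewrite sumR_by_tag.
        -- lra.
        -- intros [a i] Hq. exact (Htags a i Hq).
      * intros i _. unfold arcs_len, arcs_of. rewrite map_map. apply f_equal, map_ext_in.
        intros q Hq. apply filter_In in Hq. destruct Hq as [_ Hi].
        apply Nat.eqb_eq in Hi. now rewrite Hi.
Qed.

End SectorWalks.

Lemma fold_Rmax_ge {A} (f : A -> R) l x : In x l -> f x <= fold_right Rmax 0 (map f l).
Proof.
  induction l as [|a l IH]; simpl. intros [].
  intros [<-|H]. apply Rmax_l. eapply Rle_trans. apply IH, H. apply Rmax_r.
Qed.

Lemma fold_Rmax_nonneg {A} (f : A -> R) l : 0 <= fold_right Rmax 0 (map f l).
Proof. induction l; simpl. lra. eapply Rle_trans. apply IHl. apply Rmax_r. Qed.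

Lemma dist_le_diam l p q : In p l -> In q l -> dist p q <= diam l.
Proof.
  intros Hp Hq. unfold diam. eapply Rle_trans. apply (fold_Rmax_ge (dist p) l q Hq).
  apply (fold_Rmax_ge (fun p => fold_right Rmax 0 (map (dist p) l)) l p Hp).
Qed.

Lemma union_cost_le_walks O k u N S alpha (X : nat -> R) :
  (1 <= k)%nat -> (1 <= N)%nat -> NoDup u -> 0 <= alpha ->
  (forall i, (1 <= i <= ceil_div (length u) N)%nat ->
     is_approx_solution alpha (group u N i) O k (S i)) ->
  (forall i, (1 <= i <= ceil_div (length u) N)%nat ->
     exists w, incl (group u N i) w /\ tour_cost O w <= X i) ->
  union_cost O S (ceil_div (length u) N)
    <= alpha * (sumR (map X (seq 1 (ceil_div (length u) N)))
                + 2 / INR k * sumR (map (dist O) u)).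
Proof.
  intros Hk HN Hnodup Halpha HS HX. unfold union_cost. eapply Rle_trans.
  - apply (sumR_le _ _ (fun i => alpha * (X i + 2 / INR k * sumR (map (dist O) (group u N i))))).
    intros i Hi. apply in_seq in Hi. destruct (HX i ltac:(lia)) as [w [Hcov Hw]].
    eapply Rle_trans.
    + exact (approx_cost_le_walk O k Hk _ _ _ w Halpha (group_nodup u N Hnodup i)
               (HS i ltac:(lia)) Hcov).
    + apply Rmult_le_compat_l; lra.
  - rewrite sumR_scal, sumR_plus, sumR_scal, (sum_over_groups u N HN). lra.
Qed.

Theorem theorem6 (V : list pt) (O : pt) (k M : nat)
  (HV : NoDup V) (Hk : (1 <= k)%nat) (HM : (1 <= M)%nat)
  (theta : pt -> R) (Htheta : is_polar_angle O V theta)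
  (u : list pt) (Hperm : Permutation V u)
  (Hsorted : Sorted (fun a b => theta a <= theta b) u)
  (S : nat -> list (list pt))
  (HS : forall i, (1 <= i <= ceil_div (length V) (M * k))%nat ->
          is_approx_solution (1 + 1 / INR M) (group u (M * k) i) O k (S i))
  (T0 : R) (HT0 : is_min_tsp V T0) :
  union_cost O S (ceil_div (length V) (M * k)) <=
    (1 + 1 / INR M) *
    (T0 + rad_inf O V k
     + 3 * PI * diam (O :: V) / 2 * INR (ceil_div (length V) (M * k))).
Proof.
  set (N := (M * k)%nat) in *. set (D := diam (O :: V)).
  rewrite (Permutation_length Hperm) in HS |- *.
  assert (HN : (1 <= N)%nat) by (unfold N; nia).
  assert (HD0 : 0 <= D) by apply fold_Rmax_nonneg.
  destruct HT0 as [[p [Hp Hp_len]] _].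
  destruct (sector_walks O V u theta N D T0 p HN HV Hperm
              (Sorted_StronglySorted (fun a b c => @Rle_trans (theta a) (theta b) (theta c))
                 Hsorted)
              Htheta (fun v Hv => dist_le_diam (O :: V) O v (or_introl eq_refl) (or_intror Hv))
              HD0 Hp Hp_len)
    as [X [HX Hsum]].
  assert (Halpha : 0 <= 1 + 1 / INR M)
    by (pose proof (Rdiv_pos_pos 1 (INR M) Rlt_0_1 (lt_0_INR M HM)); lra).
  eapply Rle_trans.
  { exact (union_cost_le_walks O k u N S _ X Hk HN (Permutation_NoDup Hperm HV) Halpha HS HX). }
  unfold rad_inf. rewrite <- (sumR_perm _ _ (Permutation_map (dist O) Hperm)).
  apply Rmult_le_compat_l. exact Halpha.
  assert (4 * D <= 3 * PI * D / 2) by (pose proof PI2_3_2; nra).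
  pose proof (pos_INR (ceil_div (length u) N)). nra.
Qed.
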